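(* Let $x\in\mathbb{R}^{w\times h}$ be a sample with true label $y_0$, let $\mathbb{P}$ be a set of patch regions, let $\mathbb{M}_{\mathbb{P}}$ be a covering mask set for $\mathbb{P}$, and let $\tau\in[0,1]$. Suppose $$\max\{f_{\mathrm{conf}}(x_{\mathrm{M}}) : \mathrm{M}\in\mathbb{M}_{\mathbb{P}},\ f(x_{\mathrm{M}})\neq y_0\}<\tau .$$ Then for every $x'\in\mathbb{A}_{\mathbb{P}}(x)$ with $f(x')\neq y_0$, at least one of the following holds: (i) $\{x'_{\mathrm{M}} : \mathrm{M}\in\mathbb{M}_{\mathbb{P}},\ f(x'_{\mathrm{M}})\neq f(x')\}\neq\emptyset$; (ii) $\min\{f_{\mathrm{conf}}(x'_{\mathrm{M}}) : \mathrm{M}\in\mathbb{M}_{\mathbb{P}},\ f(x'_{\mathrm{M}})= f(x')\}<\tau$. Equivalently, in terms of the HiCert functions $v,w$ defined in the context: $v(x)$ implies that $w(x')$ holds for every $x'\in\mathbb{A}_{\mathbb{P}}(x)$ with $f(x')\neq y_0$.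
   Context: Samples are real matrices in $\mathbb{R}^{w\times h}$; $J$ is the all-ones matrix, and $+,-,\odot$ are entrywise. A classifier is a function $f:\mathbb{R}^{w\times h}\to\mathcal{Y}$ ($\mathcal{Y}$ a finite label set) together with a confidence function $f_{\mathrm{conf}}:\mathbb{R}^{w\times h}\to(0,1)$. A patch region is $\mathrm{P}\in\{0,1\}^{w\times h}$; $\mathbb{P}$ is a set of patch regions. The attack constraint set of $x$ is $\mathbb{A}_{\mathbb{P}}(x)=\{x'' : \exists\,\mathrm{P}\in\mathbb{P},\ x''=(J-\mathrm{P})\odot x+\mathrm{P}\odot x''\}$. A mask is $\mathrm{M}\in\{0,1\}^{w\times h}$, and the mutant of $\hat x$ for $\mathrm{M}$ is $\hat x_{\mathrm{M}}=(J-\mathrm{M})\odot\hat x$. A covering mask set for $\mathbb{P}$ is a finite set of masks $\mathbb{M}_{\mathbb{P}}$ such that for every $\mathrm{P}\in\mathbb{P}$ there is $\mathrm{M}\in\mathbb{M}_{\mathbb{P}}$ with $\mathrm{P}\odot\mathrm{M}=\mathrm{P}$. Conventions: $\max\emptyset=-\infty$, $\min\emptyset=+\infty$. HiCert's certification function is $v(x):=[\max\{f_{\mathrm{conf}}(x_{\mathrm{M}}):\mathrm{M}\in\mathbb{M}_{\mathbb{P}}, f(x_{\mathrm{M}})\neq y_0\}<\tau]$ (with $y_0$ the true label of $x$), and its warning function is $w(\hat x):=[\{\hat x_{\mathrm{M}}:\mathrm{M}\in\mathbb{M}_{\mathbb{P}}, f(\hat x_{\mathrm{M}})\neq f(\hat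 x)\}\neq\emptyset]\lor[\min\{f_{\mathrm{conf}}(\hat x_{\mathrm{M}}):\mathrm{M}\in\mathbb{M}_{\mathbb{P}}, f(\hat x_{\mathrm{M}})=f(\hat x)\}<\tau]$. *)

From HB Require Import structures.
From mathcomp Require Import all_boot all_order all_algebra.
From mathcomp Require Import all_classical all_reals ereal.
Set Implicit Arguments. Unset Strict Implicit. Unset Printing Implicit Defensive.
Import Order.TTheory GRing.Theory Num.Theory.
Local Open Scope ring_scope.
Local Open Scope classical_set_scope.

Section HiCert.
Variables (R : realType) (w h : nat).

(* samples are real w x h matrices; patch regions / masks are {0,1}-matrices,
   represented as boolean matrices and cast to 0/1 real matrices. *)
Definition sample := 'M[R]_(w, h).
Definition region := 'M[bool]_(w, h).

Definition J : sample := const_mx 1.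
Definition toR (P : region) : sample := map_mx (fun b : bool => (b%:R : R)) P.
Definition hadamard (A B : sample) : sample := map2_mx (fun a b => a * b) A B.

Definition attack_set (PP : {set region}) (x : sample) : set sample :=
  [set x'' | exists2 P, P \in PP &
     x'' = hadamard (J - toR P) x + hadamard (toR P) x''].

Definition mutant (M : region) (xh : sample) : sample := hadamard (J - toR M) xh.

Definition covering (PP MM : {set region}) : Prop :=
  forall P, P \in PP -> exists2 M, M \in MM & hadamard (toR P) (toR M) = toR P.

Variables (Y : finType) (f : sample -> Y) (fconf : sample -> R).

(* max over empty = -oo, min over empty = +oo *)
Definition maxconf_wrong (MM : {set region}) (x : sample) (y0 : Y) : \bar R :=
  \big[Order.max/-oo%E]_(M in MM | f (mutant M x) != y0) (fconf (mutant M x))%:E.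

Definition minconf_same (MM : {set region}) (xh : sample) : \bar R :=
  \big[Order.min/+oo%E]_(M in MM | f (mutant M xh) == f xh) (fconf (mutant M xh))%:E.

Definition certify (MM : {set region}) (tau : R) (x : sample) (y0 : Y) : Prop :=
  (maxconf_wrong MM x y0 < tau%:E)%E.

Definition warn (MM : {set region}) (tau : R) (xh : sample) : Prop :=
  [set mutant M xh | M in [set M | M \in MM /\ f (mutant M xh) != f xh]] != set0
  \/ (minconf_same MM xh < tau%:E)%E.

End HiCert.

(* A mask M covering the patch P erases every pixel an attacker may alter, so
   the mutants of x and of any x' in A_P(x) under M coincide.  If f(x'_M) differs
   from f(x') we are in case (i); otherwise x_M is misclassified (as f(x') != y0),
   so its confidence is below tau by certification, and it bounds the minimum
   in case (ii). *)
From HB Require Import structures.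
From mathcomp Require Import all_boot all_order all_algebra.
From mathcomp Require Import all_classical all_reals ereal.
Set Implicit Arguments. Unset Strict Implicit. Unset Printing Implicit Defensive.
Import Order.TTheory GRing.Theory Num.Theory.
Local Open Scope ring_scope.
Local Open Scope classical_set_scope.

Section Masking.
Variables (R : realType) (w h : nat).

Lemma toR_cover_outside (P M : 'M[bool]_(w, h)) (i : 'I_w) (j : 'I_h) :
  hadamard (toR R P) (toR R M) = toR R P -> M i j = false ->
  P i j = false.
Proof.
move=> /(congr1 (fun A : 'M[R]_(w, h) => A i j)); rewrite /hadamard /toR !mxE.
by case: (M i j); case: (P i j) => //=; rewrite mulr0 => /esym/eqP; rewrite oner_eq0.
Qed.

Lemma mutant_attack_cover (P M : 'M[bool]_(w, h)) (x x' : 'M[R]_(w, h)) :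
  hadamard (toR R P) (toR R M) = toR R P ->
  x' = hadamard (J R w h - toR R P) x + hadamard (toR R P) x' ->
  mutant M x' = mutant M x.
Proof.
move=> cover_PM attack_x'; apply/matrixP => i j.
rewrite /mutant /hadamard /toR /J !mxE.
case MijE: (M i j); first by rewrite subrr !mul0r.
have PijF := toR_cover_outside cover_PM MijE.
move/(congr1 (fun A : 'M[R]_(w, h) => A i j)): attack_x'.
by rewrite /hadamard /toR /J !mxE PijF subr0 !mul1r mul0r addr0 => ->.
Qed.

End Masking.

Theorem theorem2 (R : realType) (w h : nat) (Y : finType)
  (f : 'M[R]_(w, h) -> Y) (fconf : 'M[R]_(w, h) -> R)
  (hconf : forall z, 0 < fconf z < 1)
  (PP MM : {set 'M[bool]_(w, h)}) (hcov : @covering R w h PP MM)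
  (tau : R) (htau : 0 <= tau <= 1)
  (x : 'M[R]_(w, h)) (y0 : Y) :
  certify f fconf MM tau x y0 ->
  forall x' : 'M[R]_(w, h), x' \in attack_set PP x -> f x' != y0 ->
    warn f fconf MM tau x'.
Proof.
move=> cert x' /set_mem [P PP_P attack_x'] fx'_y0.
have [M MM_M cover_PM] := hcov P PP_P.
have mutant_eq := mutant_attack_cover cover_PM attack_x'.
have [f_same|f_diff] := eqVneq (f (mutant M x')) (f x'); last first.
  by left; apply/set0P; exists (mutant M x'); exists M.
right; apply: le_lt_trans cert.
have min_le : (minconf_same f fconf MM x' <= (fconf (mutant M x'))%:E)%E.
  by rewrite /minconf_same; apply: bigmin_le_cond; rewrite MM_M f_same eqxx.
apply: (le_trans min_le); rewrite mutant_eq.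
by rewrite /maxconf_wrong; apply: le_bigmax_cond; rewrite MM_M -mutant_eq f_same.
Qed.
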